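(* Let $G_0^*$ and $G_1^*$ be $k$-uniform hypergraphs on $n$ and $m$ vertices respectively, and let $\mathcal{A}$ be their corona matrix. Then for every real $\lambda$ that is not an eigenvalue of $A(G_1^* )$, $$P_{\mathcal{A}}(\lambda)=\big(P_{A(G_1^* )}(\lambda)\big)^n\,P_{A(G_0^* )}\Big(\lambda+\binom{m-1}{k-2}^2\chi_{A(G_1^* )}(\lambda)\Big).$$
   Context: All hypergraphs are finite and simple: a hypergraph $G^*=(V,E)$ consists of a finite vertex set $V$ and a set $E$ of subsets of $V$ (hyperedges), each of size at least $2$. It is $k$-uniform if every hyperedge has exactly $k$ elements. For a hypergraph with vertices $v_1,\dots,v_n$, the adjacency matrix $A(G^* )$ is the $n\times n$ matrix whose $(i,j)$ entry, for $i\ne j$, is the number of hyperedges containing both $v_i$ and $v_j$, and whose diagonal entries are $0$. $J_{a,b}$ is the all-ones $a\times b$ matrix, $I_n$ the identity, $\otimes$ the Kronecker product. For a square matrix $M$, $P_M(\lambda)=\det(M-\lambda I)$. Binomial coefficients $\binom{x}{y}$ with integers $x\ge 0$ and $y$ are $0$ when $y<0$ or $y>x$. Coronal: for an $n\times n$ matrix $M$ and real $\lambda$ with $M-\lambda I_n$ invertible, $\chi_M(\lambda)=J_{1,n}(M-\lambda I_n)^{-1}J_{n,1}$, the sum of all entries of $(M-\lambda I_n)^{-1}$. Corona matrix: for $k$-uniform hypergraphs $G_0^*$ on $n$ vertices and $G_1^*$ on $m$ vertices, with $b=\binom{m-1}{k-2}$, the corona matrix is $$\mathcal{A}=\begin{bmatrix}A(G_0^*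 ) & b\,(J_{1,m}\otimes I_n)\\ b\,(J_{m,1}\otimes I_n) & A(G_1^* )\otimes I_n\end{bmatrix}.$$ *)

From mathcomp Require Import all_boot all_order all_algebra.
Set Implicit Arguments.
Unset Strict Implicit.
Unset Printing Implicit Defensive.
Import Order.TTheory GRing.Theory Num.Theory.
Local Open Scope ring_scope.

Record hypergraph (n : nat) := Hypergraph {
  hedges : {set {set 'I_n}};
  hedge_size : forall e, e \in hedges -> (2 <= #|e|)%N }.

Definition uniform (k n : nat) (G : hypergraph n) : Prop :=
  forall e, e \in hedges G -> #|e| = k.

Definition adj (R : nzRingType) (n : nat) (G : hypergraph n) : 'M[R]_n :=
  \matrix_(i, j) (if i == j then 0
                  else #|[set e in hedges G | (i \in e) && (j \in e)]|%:R).

(* Kronecker product; row index of A (x) B : i1 * m2 + i2 *)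
Lemma kron_div_lt (a b : nat) (i : 'I_(a * b)) : (i %/ b < a)%N.
Proof.
case: b i => [|b] [i hi] /=; first by rewrite muln0 in hi.
by rewrite ltn_divLR.
Qed.

Lemma kron_mod_lt (a b : nat) (i : 'I_(a * b)) : (i %% b < b)%N.
Proof.
case: b i => [|b] [i hi] /=; first by rewrite muln0 in hi.
by rewrite ltn_mod.
Qed.

Definition kdiv (a b : nat) (i : 'I_(a * b)) : 'I_a := Ordinal (kron_div_lt i).
Definition kmod (a b : nat) (i : 'I_(a * b)) : 'I_b := Ordinal (kron_mod_lt i).

Definition kron (R : nzRingType) (m1 n1 m2 n2 : nat)
  (A : 'M[R]_(m1, n1)) (B : 'M[R]_(m2, n2)) : 'M[R]_(m1 * m2, n1 * n2) :=
  \matrix_(i, j) (A (kdiv i) (kdiv j) * B (kmod i) (kmod j)).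

Definition Jmx (R : nzRingType) (a b : nat) : 'M[R]_(a, b) := const_mx 1.

Definition charP (R : comNzRingType) (n : nat) (M : 'M[R]_n) (l : R) : R :=
  \det (M - l%:M).

Definition coronal (R : fieldType) (n : nat) (M : 'M[R]_n) (l : R) : R :=
  (Jmx R 1 n *m invmx (M - l%:M) *m Jmx R n 1) ord0 ord0.

Definition corona_mx (R : nzRingType) (k n m : nat)
  (G0 : hypergraph n) (G1 : hypergraph m) : 'M[R]_(n + m * n) :=
  let b : R := ('C(m.-1, k - 2))%:R in
  block_mx (adj R G0) (castmx (mul1n n, erefl) (b *: kron (Jmx R 1 m) (1%:M : 'M[R]_n)))
           (castmx (erefl, mul1n n) (b *: kron (Jmx R m 1) (1%:M : 'M[R]_n)))
           (kron (adj R G1) (1%:M : 'M[R]_n)).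

From mathcomp Require Import all_boot all_order all_algebra.
From mathcomp Require Import zify ring fingroup perm.
Import GRing.Theory.
Set Implicit Arguments.
Unset Strict Implicit.
Unset Printing Implicit Defensive.
Local Open Scope ring_scope.

(* Take the Schur complement of the lower right block [A(G1) (x) I_n - l].
   That block is [(A(G1) - l) (x) I_n], with inverse [(A(G1) - l)^-1 (x) I_n]
   and determinant [P_{A(G1)}(l)^n].  By the mixed-product rule the correction
   term of the complement is [b^2 (J_{1,m} (A(G1) - l)^-1 J_{m,1}) (x) I_n],
   and the 1 x 1 matrix in front is the coronal [chi_{A(G1)}(l)], so the
   complement is [A(G0) - (l + b^2 chi_{A(G1)}(l)) I_n]. *)

Lemma kidx_lt a b (x : 'I_a) (y : 'I_b) : (x * b + y < a * b)%N.
Proof. by case: x y => x hx [y hy] /=; nia. Qed.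

Definition kidx a b (x : 'I_a) (y : 'I_b) : 'I_(a * b) := Ordinal (kidx_lt x y).

Lemma kdiv_kidx a b (x : 'I_a) (y : 'I_b) : kdiv (kidx x y) = x.
Proof.
by apply: val_inj; case: x y => x hx [y hy] /=; rewrite divnMDl ?divn_small //; lia.
Qed.

Lemma kmod_kidx a b (x : 'I_a) (y : 'I_b) : kmod (kidx x y) = y.
Proof. by apply: val_inj; case: x y => x hx [y hy] /=; rewrite modnMDl modn_small. Qed.

Lemma kidxK a b (i : 'I_(a * b)) : kidx (kdiv i) (kmod i) = i.
Proof. by apply: val_inj; rewrite /= -divn_eq. Qed.

Lemma kron_idx_eqE a b (i j : 'I_(a * b)) :
  (i == j) = (kdiv i == kdiv j) && (kmod i == kmod j).
Proof.
apply/eqP/andP => [-> // | [/eqP eq_div /eqP eq_mod]].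
by rewrite -(kidxK i) -(kidxK j) eq_div eq_mod.
Qed.

Lemma big_kidx (R : nmodType) a b (F : 'I_a -> 'I_b -> R) :
  \sum_(i < a * b) F (kdiv i) (kmod i) = \sum_(x < a) \sum_(y < b) F x y.
Proof.
rewrite pair_big (reindex (fun i : 'I_(a * b) => (kdiv i, kmod i))) //=.
exists (fun p : 'I_a * 'I_b => kidx p.1 p.2) => [i _ | [x y] _] /=.
  by rewrite kidxK.
by rewrite kdiv_kidx kmod_kidx.
Qed.

Section KroneckerAlgebra.

Variable R : comNzRingType.

Lemma mulmx_kron p1 q1 r1 p2 q2 r2 (A : 'M[R]_(p1, q1)) (B : 'M[R]_(p2, q2))
    (C : 'M[R]_(q1, r1)) (D : 'M[R]_(q2, r2)) :
  kron A B *m kron C D = kron (A *m C) (B *m D).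
Proof.
apply/matrixP => i j; rewrite !mxE.
under eq_bigr => k _ do rewrite !mxE.
rewrite (big_kidx (fun x y => A (kdiv i) x * B (kmod i) y * (C x (kdiv j) * D y (kmod j)))).
rewrite big_distrl /=; apply: eq_bigr => x _.
by rewrite big_distrr /=; apply: eq_bigr => y _; ring.
Qed.

Lemma kron_scalar_mx p q (a c : R) :
  kron (a%:M : 'M_p) (c%:M : 'M_q) = (a * c)%:M.
Proof.
apply/matrixP => i j; rewrite !mxE (kron_idx_eqE i j).
by case: (kdiv i == kdiv j); case: (kmod i == kmod j); rewrite ?mulr1n ?mulr0n ?mulr0 ?mul0r.
Qed.

Lemma kron_mx1_subr_scalar p q (A : 'M[R]_p) (l : R) :
  kron A (1%:M : 'M_q) - l%:M = kron (A - l%:M) 1%:M.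
Proof.
apply/matrixP => i j; rewrite !mxE (kron_idx_eqE i j).
by case: (kdiv i == kdiv j); case: (kmod i == kmod j);
  rewrite ?mulr1n ?mulr0n ?mulr1 ?mulr0 ?subr0.
Qed.

Lemma det_reindex p q (A : 'M[R]_q) (f : 'I_p -> 'I_q) :
  p = q -> injective f -> \det (\matrix_(i, j) A (f i) (f j)) = \det A.
Proof.
move=> eq_pq f_inj; subst q; pose s := perm f_inj.
have -> : \matrix_(i, j) A (f i) (f j) = row_perm s (col_perm s A).
  by apply/matrixP => i j; rewrite !mxE !permE.
rewrite row_permE col_permE mulmxA !det_mulmx mulrAC -!det_mulmx.
by rewrite -perm_mxM mulgV perm_mx1 mul1mx.
Qed.

Lemma kdiv_lshift a b (x : 'I_b) : kdiv (lshift (a * b) x : 'I_(a.+1 * b)) = ord0.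
Proof. by apply: val_inj; rewrite /= divn_small. Qed.

Lemma kmod_lshift a b (x : 'I_b) : kmod (lshift (a * b) x : 'I_(a.+1 * b)) = x.
Proof. by apply: val_inj; rewrite /= modn_small. Qed.

Lemma kdiv_rshift a b (i : 'I_(a * b)) :
  kdiv (rshift b i : 'I_(a.+1 * b)) = lift ord0 (kdiv i).
Proof.
apply: val_inj; case: b i => [|b] i /=; first by case: i => i; rewrite muln0.
by rewrite -{1}(mul1n b.+1) divnMDl.
Qed.

Lemma kmod_rshift a b (i : 'I_(a * b)) : kmod (rshift b i : 'I_(a.+1 * b)) = kmod i.
Proof. by apply: val_inj; rewrite /= -{1}(mul1n b) modnMDl. Qed.

Lemma kron1mx_block a b (M : 'M[R]_b) :
  kron (1%:M : 'M_a.+1) M = block_mx M 0 0 (kron (1%:M : 'M_a) M) :> 'M_(b + a * b).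
Proof.
apply/matrixP => i j; rewrite mxE -[i](@splitK b (a * b)) -[j](@splitK b (a * b)).
by case: (split i) => x; case: (split j) => y;
  rewrite ?block_mxEul ?block_mxEur ?block_mxEdl ?block_mxEdr ?mxE
          ?kdiv_lshift ?kmod_lshift ?kdiv_rshift ?kmod_rshift /= ?mul1r ?mul0r
          ?(inj_eq lift_inj).
Qed.

Lemma det_kron1mx a b (M : 'M[R]_b) : \det (kron (1%:M : 'M_a) M) = \det M ^+ a.
Proof.
elim: a => [|a IHa]; first by rewrite det_mx00 expr0.
by rewrite kron1mx_block det_ublock IHa exprS.
Qed.

Lemma det_kronmx1 a b (M : 'M[R]_a) : \det (kron M (1%:M : 'M_b)) = \det M ^+ b.
Proof.
pose swap (i : 'I_(b * a)) : 'I_(a * b) := kidx (kmod i) (kdiv i).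
have swap_inj : injective swap.
  move=> i j eq_swap; rewrite -(kidxK i) -(kidxK j).
  have := congr1 (@kdiv _ _) eq_swap; have := congr1 (@kmod _ _) eq_swap.
  by rewrite !kdiv_kidx !kmod_kidx => -> ->.
rewrite -(det_kron1mx b M) -(det_reindex _ (mulnC b a) swap_inj).
by congr (\det _); apply/matrixP => i j; rewrite !mxE /swap !kdiv_kidx !kmod_kidx mulrC.
Qed.

Lemma det_block_schur p q (A : 'M[R]_p) (B : 'M[R]_(p, q)) (C : 'M[R]_(q, p))
    (D D' : 'M[R]_q) :
  D' *m D = 1%:M -> \det (block_mx A B C D) = \det (A - B *m D' *m C) * \det D.
Proof.
move=> D'K.
have -> : block_mx A B C D
    = block_mx 1%:M (B *m D') 0 1%:M *m block_mx (A - B *m D' *m C) 0 C D.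
  by rewrite mulmx_block !mul1mx !mul0mx !add0r subrK -mulmxA D'K mulmx1.
by rewrite det_mulmx det_ublock det_lblock !det1 !mul1r.
Qed.

End KroneckerAlgebra.

Section CastMul.

Variable R : nzRingType.

Lemma castmx_mulmxl p p' q r (e : p = p') (A : 'M[R]_(p, q)) (B : 'M[R]_(q, r)) :
  castmx (e, erefl) A *m B = castmx (e, erefl) (A *m B).
Proof. by subst p'; rewrite !castmx_id. Qed.

Lemma castmx_mulmxr p q r r' (e : r = r') (A : 'M[R]_(p, q)) (B : 'M[R]_(q, r)) :
  A *m castmx (erefl, e) B = castmx (erefl, e) (A *m B).
Proof. by subst r'; rewrite !castmx_id. Qed.

Lemma castmx_scalar_mx p p' (e e' : p = p') (a : R) :
  castmx (e, e') (a%:M : 'M_p) = a%:M.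
Proof. by subst p'; rewrite eq_axiomK castmx_id. Qed.

End CastMul.

Definition corona_block (R : nzRingType) n m (A0 : 'M[R]_n) (A1 : 'M[R]_m) (b : R)
    : 'M[R]_(n + m * n) :=
  block_mx A0 (castmx (mul1n n, erefl) (b *: kron (Jmx R 1 m) 1%:M))
              (castmx (erefl, mul1n n) (b *: kron (Jmx R m 1) 1%:M))
              (kron A1 1%:M).

Lemma corona_block_schur_term (R : comNzRingType) n m (M : 'M[R]_m) (b : R) :
  castmx (mul1n n, erefl) (b *: kron (Jmx R 1 m) 1%:M) *m kron M 1%:M
    *m castmx (erefl, mul1n n) (b *: kron (Jmx R m 1) 1%:M)
  = (b ^+ 2 * (Jmx R 1 m *m M *m Jmx R m 1) ord0 ord0)%:M.
Proof.
rewrite castmx_mulmxr !castmx_mulmxl -!scalemxAl -!scalemxAr !mulmx_kron !mulmx1.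
rewrite {1}[_ *m Jmx R m 1]mx11_scalar kron_scalar_mx mulr1 castmx_comp.
by rewrite !scale_scalar_mx castmx_scalar_mx mulrA expr2.
Qed.

Lemma charP_corona_block (R : fieldType) n m (A0 : 'M[R]_n) (A1 : 'M[R]_m) (b l : R) :
  A1 - l%:M \in unitmx ->
  charP (corona_block A0 A1 b) l = charP A1 l ^+ n * charP A0 (l + b ^+ 2 * coronal A1 l).
Proof.
move=> unit_A1l; rewrite /charP /corona_block (scalar_mx_block n (m * n)).
rewrite opp_block_mx add_block_mx !oppr0 !addr0 kron_mx1_subr_scalar.
have kron_invK : kron (invmx (A1 - l%:M)) 1%:M *m kron (A1 - l%:M) 1%:M = 1%:M :> 'M_(m * n).
  by rewrite mulmx_kron mulVmx // mul1mx kron_scalar_mx mulr1.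
rewrite (det_block_schur _ _ _ kron_invK).
by rewrite corona_block_schur_term det_kronmx1 mulrC raddfD opprD addrA.
Qed.

Lemma unitmx_sub_scalar_eigenvalueN (R : fieldType) n (A : 'M[R]_n) (l : R) :
  ~~ eigenvalue A l -> A - l%:M \in unitmx.
Proof. by rewrite -row_free_unit -kermx_eq0 => /negbNE. Qed.

Theorem theorem4p4 (R : realFieldType) (k n m : nat)
  (G0 : hypergraph n) (G1 : hypergraph m)
  (hk : (2 <= k)%N) (u0 : uniform k G0) (u1 : uniform k G1) (l : R) :
  ~~ eigenvalue (adj R G1) l ->
  charP (corona_mx R k G0 G1) l =
  charP (adj R G1) l ^+ n *
  charP (adj R G0) (l + ('C(m.-1, k - 2))%:R ^+ 2 * coronal (adj R G1) l).
Proof.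
move=> /unitmx_sub_scalar_eigenvalueN unit_A1l.
exact: (charP_corona_block (adj R G0) ('C(m.-1, k - 2))%:R unit_A1l).
Qed.
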